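(* Let $G=(V,E)$ be a finite graph with boundary $B\subseteq V$, $|B|\ge2$, with maximum degree $\Delta\ge3$, and let $t\ge1$ be an integer such that the boundary diameter satisfies $D_B\ge 2t+2$ (in particular $D_B\ge4$). Let $q=\Delta-1$. Then $$\sigma_2(G,B)\le\frac{(q+1)(q^{t+1}-q^t+1)}{q^{t+1}}=q-\frac{q^t-q-1}{q^{t+1}}.$$ Moreover, the right-hand side is monotone decreasing in $t$.
   Context: A boundary is $B\subseteq V$ with $|B|\ge2$. The boundary diameter $D_B$ is $\max_{x,y\in B}\operatorname{dist}_G(x,y)$, with $\operatorname{dist}_G$ the graph distance in $G$. Rayleigh quotient: $R(f)=\frac{\sum_{\{x,y\}\in E}(f(x)-f(y))^2}{\sum_{x\in B}f(x)^2}$ ($+\infty$ if $f|_B=0$); $\sigma_2(G,B)=\min_{W\subseteq\mathbb{R}^V,\dim W=2}\max_{0\ne f\in W}R(f)$. *)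

From HB Require Import structures.
From mathcomp Require Import all_boot all_order all_algebra.
From mathcomp Require Import boolp classical_sets reals constructive_ereal ereal.
Set Implicit Arguments. Unset Strict Implicit. Unset Printing Implicit Defensive.
Import Order.TTheory GRing.Theory Num.Theory.
Local Open Scope ring_scope.

(* A finite simple graph: vertex set V (a finType), adjacency adj, assumed
   symmetric and irreflexive in the main theorem. *)

Section Graph.
Variables (V : finType) (adj : rel V).

Definition deg (v : V) : nat := #|[set w | adj v w]|.
Definition maxdeg : nat := (\max_(v : V) deg v)%N.

(* dist_G(x,y) >= d : every walk from x to y has length >= d
   (dist_G is the least length of a walk, +infinity if none). *)
Definition dist_ge (x y : V) (d : nat) : Prop :=
  forall p : seq V, path adj x p -> last x p = y -> (d <= size p)%N.

Definition bdiam_ge (B : {set V}) (d : nat) : Prop :=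
  exists x y, [/\ x \in B, y \in B & dist_ge x y d].

Variable R : realType.

(* sum over edges {x,y} of (f x - f y)^2; each unordered edge is counted
   twice in the ordered double sum, hence the factor 1/2 *)
Definition energy (f : {ffun V -> R^o}) : R :=
  2^-1 * \sum_(x : V) \sum_(y : V | adj x y) (f x - f y) ^+ 2.

Definition bnorm (B : {set V}) (f : {ffun V -> R^o}) : R :=
  \sum_(x in B) f x ^+ 2.

Definition rayleigh (B : {set V}) (f : {ffun V -> R^o}) : \bar R :=
  if bnorm B f == 0 then +oo%E else (energy f / bnorm B f)%:E.

Definition sigma2 (B : {set V}) : \bar R :=
  ereal_inf [set ereal_sup [set rayleigh B f | f in
                   [set f : {ffun V -> R^o} | (f \in W) /\ f != 0]]
            | W in [set W : {vspace {ffun V -> R^o}} | \dim W = 2%N]].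

End Graph.

Definition sigma_bound {R : realType} (q : R) (t : nat) : R :=
  (q + 1) * (q ^+ t.+1 - q ^+ t + 1) / q ^+ t.+1.

From HB Require Import structures.
From mathcomp Require Import all_boot all_order all_algebra.
From mathcomp Require Import boolp classical_sets reals constructive_ereal ereal.
From mathcomp Require Import ring lra zify.
Import Order.TTheory GRing.Theory Num.Theory.
Local Open Scope ring_scope.
Set Implicit Arguments. Unset Strict Implicit. Unset Printing Implicit Defensive.

(* Take boundary vertices x, y at distance at least 2t+2 and the test functions
   phi_x v = q^-d(x,v) for d(x,v) <= t, 0 otherwise (and phi_y likewise).  Their
   supports, the t-balls around x and y, are disjoint and joined by no edge, so
   on span(phi_x, phi_y) the energy and the boundary norm are both diagonal and
   the Rayleigh quotient is at most the larger of R(phi_x), R(phi_y).  As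
   phi_x x = 1, the boundary norm of phi_x is at least 1.  Every vertex at
   distance 1 <= d <= t from x has a neighbour at distance d-1, so at most
   (q+1) q^d edges lead from distance d to distance d+1, and the energy of phi_x
   is at most
     sum_(d<t) (q+1) q^d (q^-d - q^-(d+1))^2 + (q+1) q^t q^-2t
       = (q+1) (1 - q^-1 + q^-(t+1)),
   which is the stated bound. *)

Section GraphBalls.
Variables (V : finType) (adj : rel V).
Hypothesis adj_sym : symmetric adj.

Fixpoint gball (x : V) (k : nat) : {set V} :=
  if k is k'.+1 then gball x k' :|: [set w | [exists u in gball x k', adj u w]]
  else [set x].

Lemma subset_gballS x k : gball x k \subset gball x k.+1.
Proof. exact: finset.subsetUl. Qed.

Lemma subset_gball x k m : (k <= m)%N -> gball x k \subset gball x m.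
Proof.
elim: m => [|m IHm]; first by rewrite leqn0 => /eqP->.
rewrite leq_eqVlt => /orP[/eqP->//|/IHm sub_km].
exact: fintype.subset_trans sub_km (subset_gballS x m).
Qed.

Lemma mem_gball_adj x k u w : u \in gball x k -> adj u w -> w \in gball x k.+1.
Proof.
by move=> u_in uw; rewrite /= !inE; apply/orP; right; apply/existsP; exists u; rewrite u_in.
Qed.

Lemma gball_walk x k v : v \in gball x k ->
  exists p, [/\ path adj x p, last x p = v & (size p <= k)%N].
Proof.
elim: k v => [|k IHk] v /=; first by rewrite inE => /eqP->; exists [::].
case/setUP => [/IHk [p [px pv pk]]|]; first by exists p; split => //; apply: leqW.
rewrite inE => /existsP [u /andP [/IHk [p [px pu pk]] uv]].
by exists (rcons p v); rewrite rcons_path px pu uv last_rcons size_rcons.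
Qed.

Lemma dist_ge_notin_gball x y d k :
  dist_ge adj x y d -> (k < d)%N -> y \notin gball x k.
Proof.
move=> dxy kd; apply/negP => /gball_walk [p [px py pk]].
by have := dxy p px py; rewrite leqNgt (leq_ltn_trans pk kd).
Qed.

Lemma gball_triangle x y a b v :
  v \in gball x a -> v \in gball y b -> y \in gball x (a + b).
Proof.
elim: b a v => [|b IHb] a v vx /=; first by rewrite inE => /eqP <-; rewrite addn0.
case/setUP => [/(IHb a v vx) yx|].
  by rewrite addnS (fintype.subsetP (subset_gballS x _)).
rewrite inE => /existsP [u /andP [uy uv]].
have ux : u \in gball x a.+1 by apply: mem_gball_adj vx _; rewrite adj_sym.
by rewrite -addSnnS (IHb a.+1 u).
Qed.

End GraphBalls.

Section Levels.
Variables (V : finType) (adj : rel V) (t : nat).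

(* [level x v] is the graph distance from [x] to [v] when it is at most [t],
   and [t.+1] otherwise. *)
Definition level x v := find (fun k => v \in gball adj x k) (iota 0 t.+1).

Lemma level_leS x v : (level x v <= t.+1)%N.
Proof. by have := find_size (fun k => v \in gball adj x k) (iota 0 t.+1); rewrite size_iota. Qed.

Lemma mem_gball_level x v : (level x v <= t)%N -> v \in gball adj x (level x v).
Proof.
move=> vt; have has_v : has (fun k => v \in gball adj x k) (iota 0 t.+1).
  by rewrite has_find size_iota ltnS.
by have := nth_find 0%N has_v; rewrite nth_iota ?add0n.
Qed.

Lemma level_le_gball x v k : (k <= t)%N -> v \in gball adj x k -> (level x v <= k)%N.
Proof.
move=> kt vk; rewrite leqNgt; apply/negP => /(before_find 0%N).
by rewrite nth_iota ?add0n ?vk // ltnS.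
Qed.

Lemma level_root x : level x x = 0%N.
Proof. by apply/eqP; rewrite -leqn0 level_le_gball //= inE. Qed.

Lemma level_eq0 x v : level x v = 0%N -> v = x.
Proof. by move=> v0; have := @mem_gball_level x v; rewrite v0 /= inE => /(_ isT) /eqP. Qed.

Lemma level_adj x u w : adj u w -> (level x w <= (level x u).+1)%N.
Proof.
move=> uw; have [ut|tu] := leqP (level x u) t; last first.
  by apply: leq_trans (level_leS x w) _; rewrite ltnS ltnW.
have [u1t|] := leqP (level x u).+1 t.
  by apply: level_le_gball u1t (mem_gball_adj (mem_gball_level ut) uw).
rewrite ltnS => tu; have -> : level x u = t by apply/eqP; rewrite eqn_leq ut.
exact: level_leS.
Qed.

Lemma level_pred_adj x w : (1 <= level x w <= t)%N ->
  exists2 u, adj u w & level x u = (level x w).-1.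
Proof.
case/andP=> w1 wt; have := mem_gball_level wt.
case E: (level x w) w1 wt => [|d] // _ dt /= /setUP [wd|].
  by have := level_le_gball (ltnW dt) wd; rewrite E ltnn.
rewrite inE => /existsP [u /andP [ud uw]]; exists u => //.
have := level_adj x uw; rewrite E ltnS => du.
by apply/eqP; rewrite eqn_leq (level_le_gball (ltnW dt) ud) du.
Qed.

End Levels.

Lemma degE (V : finType) (adj : rel V) u : deg adj u = (\sum_w adj u w)%N.
Proof. by rewrite /deg -sum1dep_card big_mkcond; apply: eq_bigr => w _; case: (adj u w). Qed.

Section LevelEdges.
Variables (V : finType) (adj : rel V) (t m : nat) (x : V).
Hypothesis adj_sym : symmetric adj.
Hypothesis deg_le : forall u : V, (deg adj u <= m.+1)%N.
Local Notation level := (level adj t x).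

Definition up_deg u := (\sum_(w | level w == (level u).+1) adj u w)%N.
Definition down_deg u := (\sum_(w | level w == (level u).-1) adj u w)%N.
Definition edges_up d := (\sum_(u | level u == d) up_deg u)%N.

Lemma up_down_deg_le u : (up_deg u + down_deg u <= m.+1)%N.
Proof.
apply: leq_trans (deg_le u).
rewrite degE /up_deg /down_deg !(big_mkcond (fun w => level w == _)) -big_split.
by apply: leq_sum => w _; do 2 case: eqP => //=; lia.
Qed.

Lemma down_deg_gt0 u : (1 <= level u <= t)%N -> (0 < down_deg u)%N.
Proof.
case/level_pred_adj => w wu wlev.
by rewrite /down_deg (bigD1 w) ?wlev //= adj_sym wu.
Qed.

Lemma up_deg_le u : (1 <= level u <= t)%N -> (up_deg u <= m * down_deg u)%N.
Proof.
move=> /down_deg_gt0 down_gt0.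
have up_le : (up_deg u <= m)%N by have := up_down_deg_le u; lia.
exact: leq_trans up_le (leq_pmulr _ down_gt0).
Qed.

Lemma sum_down_deg d : (0 < d)%N ->
  (\sum_(u | level u == d) down_deg u = edges_up d.-1)%N.
Proof.
move=> d_gt0; rewrite /edges_up /up_deg.
under eq_bigr => u /eqP ud do rewrite /down_deg ud.
under [RHS]eq_bigr => w /eqP wd do rewrite wd prednK //.
rewrite exchange_big /=; apply: eq_bigr => w _; apply: eq_bigr => u _.
by rewrite adj_sym.
Qed.

Lemma edges_up_step d : (1 <= d <= t)%N -> (edges_up d <= m * edges_up d.-1)%N.
Proof.
case/andP=> d_gt0 dt; rewrite -sum_down_deg // big_distrr /=.
by apply: leq_sum => u /eqP ud; apply: up_deg_le; rewrite ud d_gt0.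
Qed.

Lemma edges_up0 : (edges_up 0 <= m.+1)%N.
Proof.
rewrite /edges_up (eq_bigl (pred1 x)) ?big_pred1_eq; last first.
  by move=> u; apply/eqP/eqP => [/level_eq0|->]; last exact: level_root.
by apply: leq_trans (up_down_deg_le x); apply: leq_addr.
Qed.

Lemma edges_up_le d : (d <= t)%N -> (edges_up d <= m.+1 * m ^ d)%N.
Proof.
elim: d => [|d IHd] dt; first by rewrite muln1 edges_up0.
apply: leq_trans (edges_up_step _) _; first by rewrite dt.
by rewrite expnS mulnCA leq_mul2l IHd ?orbT // ltnW.
Qed.

End LevelEdges.

Lemma energy_ge0 (V : finType) (adj : rel V) (R : realType) (f : {ffun V -> R^o}) :
  0 <= energy adj f.
Proof.
rewrite mulr_ge0 ?invr_ge0 ?ler0n //.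
by apply: sumr_ge0 => u _; apply: sumr_ge0 => w _; apply: sqr_ge0.
Qed.

Lemma sum_adj_symmetrize (R : numFieldType) (V : finType) (adj : rel V)
    (adj_sym : symmetric adj) (G : V -> V -> R) :
  2^-1 * \sum_u \sum_(w | adj u w) (G u w + G w u) = \sum_u \sum_(w | adj u w) G u w.
Proof.
have swap : \sum_u \sum_(w | adj u w) G w u = \sum_u \sum_(w | adj u w) G u w.
  under eq_bigr => u _ do rewrite big_mkcond; rewrite exchange_big /=.
  by apply: eq_bigr => w _; rewrite [RHS]big_mkcond; apply: eq_bigr => u _; rewrite adj_sym.
under eq_bigr => u _ do rewrite big_split /=.
rewrite big_split /= swap; set S := \sum_u _.
by rewrite -mulr2n -[S *+ 2]mulr_natl mulKf ?pnatr_eq0.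
Qed.

Section TestFunction.
Variables (V : finType) (adj : rel V) (t : nat) (R : realType) (q : R).
Hypothesis adj_sym : symmetric adj.

Definition profile (d : nat) : R := if (d <= t)%N then q^-1 ^+ d else 0.
Definition jump (d : nat) : R := (profile d - profile d.+1) ^+ 2.
Definition test_fun (x : V) : {ffun V -> R^o} := [ffun v => profile (level adj t x v)].

Lemma test_fun_root x : test_fun x x = 1.
Proof. by rewrite ffunE level_root /profile expr0. Qed.

Lemma test_fun_support x v : test_fun x v != 0 -> v \in gball adj x t.
Proof.
rewrite ffunE /profile; case: ifP => [vt _|]; last by rewrite eqxx.
exact: fintype.subsetP (subset_gball _ _ vt) _ (mem_gball_level vt).
Qed.

Lemma test_fun_bnorm_ge1 (B : {set V}) x : x \in B -> 1 <= bnorm B (test_fun x).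
Proof.
move=> xB; rewrite /bnorm (bigD1 x) //= test_fun_root expr1n lerDl.
by apply: sumr_ge0 => v _; apply: sqr_ge0.
Qed.

Variable x : V.
Local Notation level := (level adj t x).

Lemma test_fun_adj_sqr u w : adj u w ->
  (test_fun x u - test_fun x w) ^+ 2 =
    jump (level u) * (level w == (level u).+1)%:R +
    jump (level w) * (level u == (level w).+1)%:R.
Proof.
move=> uw; have := level_adj t x uw; have := level_adj t x (etrans (adj_sym w u) uw).
rewrite !ffunE.
case: (ltngtP (level u) (level w)) => [uw_lt|wu_lt|->] wu_le uw_le.
- have -> : level w = (level u).+1 by apply/eqP; rewrite eqn_leq uw_le uw_lt.
  by rewrite eqxx (ltn_eqF (ltnW (ltnSn _))) mulr0 addr0 mulr1.
- have -> : level u = (level w).+1 by apply/eqP; rewrite eqn_leq wu_le wu_lt.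
  by rewrite eqxx (ltn_eqF (ltnW (ltnSn _))) mulr0 add0r mulr1 /jump -sqrrN opprB.
- by rewrite subrr expr0n (ltn_eqF (ltnSn _)) mulr0 addr0.
Qed.

Lemma energy_test_fun :
  energy adj (test_fun x) = \sum_(d < t.+2) jump d * (edges_up adj t x d)%:R.
Proof.
rewrite /energy (eq_bigr _ (fun u _ => eq_bigr _ (@test_fun_adj_sqr u))).
rewrite sum_adj_symmetrize //.
transitivity (\sum_u jump (level u) * (up_deg adj t x u)%:R).
  apply: eq_bigr => u _; rewrite /up_deg natr_sum mulr_sumr big_mkcond [RHS]big_mkcond /=.
  by apply: eq_bigr => w _; case: (adj u w); case: eqP; rewrite ?mulr0 ?mulr1.
rewrite (partition_big (fun u => inord (level u) : 'I_t.+2) xpredT) //=.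
apply: eq_bigr => d _; rewrite /edges_up natr_sum mulr_sumr.
rewrite (eq_bigl (fun u => level u == d)) => [|u]; first by apply: eq_bigr => u /eqP ->.
by rewrite -val_eqE /= inordK // ltnS level_leS.
Qed.

End TestFunction.

Section SigmaBound.
Variables (R : realType) (q : R).

Lemma sigma_boundE t : q != 0 -> sigma_bound q t = q - (q ^+ t - q - 1) / q ^+ t.+1.
Proof.
move=> q0; rewrite /sigma_bound exprSr.
have qt0 : q ^+ t != 0 by rewrite expf_neq0.
by move: (q ^+ t) qt0 => Q Q0; field; rewrite q0 Q0.
Qed.

Lemma sigma_bound_geom t : q != 0 ->
  sigma_bound q t = (q + 1) * (1 - q^-1 + q^-1 ^+ t.+1).
Proof.
move=> q0; rewrite /sigma_bound exprVn exprSr.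
have qt0 : q ^+ t != 0 by rewrite expf_neq0.
by move: (q ^+ t) qt0 => Q Q0; field; rewrite q0 Q0.
Qed.

Lemma sigma_bound_nonincr :
  1 <= q -> {homo sigma_bound q : t1 t2 / (t1 <= t2)%N >-> t2 <= t1}.
Proof.
move=> q_ge1 t1 t2 t12; have q_gt0 : 0 < q by apply: lt_le_trans q_ge1.
rewrite !sigma_bound_geom ?gt_eqF //; apply: ler_wpM2l; first by rewrite addr_ge0 ?ltW.
by rewrite lerD2l ler_wiXn2l ?invr_ge0 ?invf_le1 ?ltnS ?(ltW q_gt0).
Qed.

End SigmaBound.

Section EnergyBound.
Variables (V : finType) (adj : rel V) (t m : nat) (R : realType).
Hypotheses (adj_sym : symmetric adj) (m_gt0 : (0 < m)%N).
Hypothesis deg_le : forall u : V, (deg adj u <= m.+1)%N.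
Local Notation q := (m%:R : R).
Local Notation r := (q^-1).
Local Notation jump := (jump t q).

Let q_neq0 : q != 0. Proof. by rewrite pnatr_eq0 -lt0n. Qed.

Lemma jump_mulXn n : (n < t)%N -> jump n * q ^+ n = (1 - r) ^+ 2 * r ^+ n.
Proof.
move=> nt; rewrite /jump /profile ltnW // nt.
have -> : (r ^+ n - r ^+ n.+1) ^+ 2 * q ^+ n = (1 - r) ^+ 2 * r ^+ n * (r ^+ n * q ^+ n).
  by rewrite [r ^+ n.+1]exprS; move: (r ^+ n) (q ^+ n) r => s Q r'; ring.
by rewrite -exprMn mulVf ?q_neq0 // expr1n mulr1.
Qed.

Lemma sum_jump_lt n : (n <= t)%N ->
  \sum_(d < n) jump d * q ^+ d = (1 - r) * (1 - r ^+ n).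
Proof.
elim: n => [|n IHn] nt; first by rewrite big_ord0 expr0 subrr mulr0.
rewrite big_ord_recr /= IHn ?(ltnW nt) // jump_mulXn // [r ^+ n.+1]exprS.
by move: (r ^+ n) r => s r'; ring.
Qed.

Lemma sum_jump_le : \sum_(d < t.+1) jump d * q ^+ d = 1 - r + r ^+ t.+1.
Proof.
rewrite big_ord_recr /= sum_jump_lt // /jump /profile leqnn ltnn subr0.
have -> : r ^+ t ^+ 2 * q ^+ t = r ^+ t * (r ^+ t * q ^+ t) by rewrite mulrA -expr2.
rewrite -exprMn mulVf ?q_neq0 // expr1n mulr1 [r ^+ t.+1]exprS.
by move: (r ^+ t) r => s r'; ring.
Qed.

Lemma energy_test_fun_le x : energy adj (test_fun adj t q x) <= sigma_bound q t.
Proof.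
rewrite energy_test_fun // big_ord_recr /= sigma_bound_geom ?q_neq0 //.
have -> : jump t.+1 = 0 by rewrite /jump /profile ltnn ltnNge leqW ?subrr ?expr0n.
rewrite mul0r addr0 -sum_jump_le mulr_sumr; apply: ler_sum => d _.
rewrite mulrCA ler_wpM2l ?sqr_ge0 // -natrX natr1 -natrM ler_nat.
have dt : (d <= t)%N := ltn_ord d.
exact (edges_up_le x adj_sym deg_le dt).
Qed.

Lemma energy_test_fun_le_bnorm (B : {set V}) x : x \in B ->
  energy adj (test_fun adj t q x) <= sigma_bound q t * bnorm B (test_fun adj t q x).
Proof.
move=> xB; have E_le := energy_test_fun_le x.
have C_ge0 := le_trans (energy_ge0 _ _) E_le.
exact: le_trans E_le (ler_peMr C_ge0 (test_fun_bnorm_ge1 _ _ _ xB)).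
Qed.

End EnergyBound.

Section FarTestFunctions.
Variables (V : finType) (adj : rel V) (t : nat) (R : realType) (q : R) (x y : V).
Hypothesis adj_sym : symmetric adj.
Hypothesis far : forall k, (k <= t + t.+1)%N -> y \notin gball adj x k.
Local Notation f := (test_fun adj t q).

Lemma gball_far_disjoint v a b : v \in gball adj x a ->
  (a + b <= t + t.+1)%N -> v \notin gball adj y b.
Proof. by move=> vx ab; apply: contraNN (far ab) => /(gball_triangle adj_sym vx). Qed.

Lemma test_fun_far_eq0 : f y x = 0.
Proof.
have xy : x \notin gball adj y t by apply: (gball_far_disjoint (a := 0)); rewrite ?leq_addr //= inE.
by apply: contraNeq xy => /test_fun_support.
Qed.

Lemma test_fun_mul_eq0 v : f x v * f y v = 0.
Proof.
have [->|/test_fun_support vx] := eqVneq (f x v) 0; first by rewrite mul0r.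
have [->|/test_fun_support vy] := eqVneq (f y v) 0; first by rewrite mulr0.
suff : v \notin gball adj y t by rewrite vy.
by apply: gball_far_disjoint vx _; rewrite leq_add2l.
Qed.

Lemma test_fun_far_adj u w : adj u w -> f x u != 0 -> f y u = 0 /\ f y w = 0.
Proof.
move=> uw /test_fun_support ux; have wx := mem_gball_adj ux uw.
have uy : u \notin gball adj y t by apply: gball_far_disjoint ux _; rewrite leq_add2l.
have wy : w \notin gball adj y t by apply: gball_far_disjoint wx _; rewrite addSnnS.
by split; [apply: contraNeq uy | apply: contraNeq wy] => /test_fun_support.
Qed.

Lemma test_fun_adj_mul_eq0 u w : adj u w -> (f x u - f x w) * (f y u - f y w) = 0.
Proof.
move=> uw; have wu : adj w u by rewrite adj_sym.
have [xu|/(test_fun_far_adj uw) [-> ->]] := eqVneq (f x u) 0; last by rewrite subrr mulr0.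
have [xw|/(test_fun_far_adj wu) [-> ->]] := eqVneq (f x w) 0; last by rewrite subrr mulr0.
by rewrite xu xw subrr mul0r.
Qed.

Lemma free_test_funs : free [:: f x; f y].
Proof.
rewrite free_cons span_seq1 seq1_free; apply/andP; split.
  apply/negP => /vlineP [k /(congr1 (fun h : {ffun V -> R^o} => h x))].
  by rewrite [RHS]ffunE test_fun_root test_fun_far_eq0 scaler0 => /eqP; rewrite oner_eq0.
apply/eqP => /(congr1 (fun h : {ffun V -> R^o} => h y)).
by rewrite test_fun_root [RHS]ffunE => /eqP; rewrite oner_eq0.
Qed.

End FarTestFunctions.

Section OrthogonalPair.
Variables (V : finType) (adj : rel V) (R : realType) (B : {set V}).
Variables f g : {ffun V -> R^o}.
Hypothesis edge_orth : forall u w, adj u w -> (f u - f w) * (g u - g w) = 0.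
Hypothesis point_orth : forall v, f v * g v = 0.

Lemma ffun_combE a b v : (a *: f + b *: g) v = a * f v + b * g v.
Proof. by rewrite !ffunE. Qed.

Lemma energy_orth_comb a b :
  energy adj (a *: f + b *: g) = a ^+ 2 * energy adj f + b ^+ 2 * energy adj g.
Proof.
rewrite /energy mulrCA [b ^+ 2 * _]mulrCA -mulrDr; congr (_ * _).
rewrite !mulr_sumr -big_split; apply: eq_bigr => u _.
rewrite !mulr_sumr -big_split; apply: eq_bigr => w uw.
rewrite !ffun_combE; have := edge_orth uw.
move: (f u) (f w) (g u) (g w) => fu fw gu gw orth.
have -> : (a * fu + b * gu - (a * fw + b * gw)) ^+ 2 =
    a ^+ 2 * (fu - fw) ^+ 2 + b ^+ 2 * (gu - gw) ^+ 2
    + 2 * a * b * ((fu - fw) * (gu - gw)) by ring.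
by rewrite orth mulr0 addr0.
Qed.

Lemma bnorm_orth_comb a b :
  bnorm B (a *: f + b *: g) = a ^+ 2 * bnorm B f + b ^+ 2 * bnorm B g.
Proof.
rewrite /bnorm !mulr_sumr -big_split; apply: eq_bigr => v _.
rewrite ffun_combE; have := point_orth v; move: (f v) (g v) => fv gv orth.
have -> : (a * fv + b * gv) ^+ 2 =
    a ^+ 2 * fv ^+ 2 + b ^+ 2 * gv ^+ 2 + 2 * a * b * (fv * gv) by ring.
by rewrite orth mulr0 addr0.
Qed.

Variable C : R.
Hypotheses (f_pos : 0 < bnorm B f) (g_pos : 0 < bnorm B g).
Hypotheses (f_le : energy adj f <= C * bnorm B f) (g_le : energy adj g <= C * bnorm B g).

Lemma rayleigh_orth_comb_le a b :
  a *: f + b *: g != 0 -> (rayleigh adj B (a *: f + b *: g)%R <= C%:E)%E.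
Proof.
move=> comb_neq0; rewrite /rayleigh bnorm_orth_comb energy_orth_comb.
have norm_gt0 : 0 < a ^+ 2 * bnorm B f + b ^+ 2 * bnorm B g.
  have [a0|a0] := eqVneq a 0.
    have [b0|b0] := eqVneq b 0; first by move: comb_neq0; rewrite a0 b0 !scale0r addr0 eqxx.
    by rewrite a0 expr0n mul0r add0r mulr_gt0 // exprn_even_gt0.
  have a2 : 0 < a ^+ 2 by rewrite exprn_even_gt0.
  have := mulr_ge0 (sqr_ge0 b) (ltW g_pos); have := mulr_gt0 a2 f_pos.
  lra.
rewrite gt_eqF // lee_fin ler_pdivrMr // mulrDr.
rewrite [C * (a ^+ 2 * _)]mulrCA [C * (b ^+ 2 * _)]mulrCA.
by apply: lerD; apply: ler_wpM2l; rewrite ?sqr_ge0.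
Qed.

Lemma sigma2_le_of_orth_pair : free [:: f; g] -> (sigma2 adj R B <= C%:E)%E.
Proof.
move=> fg_free; set W := <<[:: f; g]>>%VS.
have dimW : \dim W = 2%N by apply/eqP; exact: fg_free.
apply: le_trans (ereal_inf_lbound _) _; first by exists W.
apply: ge_ereal_sup => _ [h [hW h0] <-].
move: hW h0; rewrite /W span_cons span_seq1.
move=> /memv_addP [_ /vlineP [a ->] [_ /vlineP [b ->] ->]].
exact: rayleigh_orth_comb_le.
Qed.

End OrthogonalPair.

Theorem mainTheorem9 (R : realType) (V : finType) (adj : rel V)
  (adj_sym : symmetric adj) (adj_irr : irreflexive adj)
  (B : {set V}) (hB : (2 <= #|B|)%N)
  (hDelta : (3 <= maxdeg adj)%N)
  (t : nat) (ht : (1 <= t)%N)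
  (hD : bdiam_ge adj B (2 * t + 2)) :
  let q : R := ((maxdeg adj).-1)%:R in
  [/\ (sigma2 adj R B <= (sigma_bound q t)%:E)%E,
      sigma_bound q t = q - (q ^+ t - q - 1) / q ^+ t.+1
    & forall t1 t2 : nat, (1 <= t1)%N -> (t1 <= t2)%N ->
        sigma_bound q t2 <= sigma_bound q t1].
Proof.
move=> q; set m := (maxdeg adj).-1.
have m_gt0 : (0 < m)%N by rewrite /m; lia.
have deg_le u : (deg adj u <= m.+1)%N by rewrite prednK ?leq_bigmax //; lia.
split; [|by rewrite sigma_boundE // pnatr_eq0 -lt0n|].
- case: hD => x [y [xB yB dxy]].
  have far k : (k <= t + t.+1)%N -> y \notin gball adj x k.
    by move=> kt; apply: dist_ge_notin_gball dxy _; lia.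
  apply: (sigma2_le_of_orth_pair (f := test_fun adj t q x) (g := test_fun adj t q y)).
  + exact: test_fun_adj_mul_eq0.
  + exact: test_fun_mul_eq0.
  + exact: lt_le_trans ltr01 (test_fun_bnorm_ge1 _ _ _ xB).
  + exact: lt_le_trans ltr01 (test_fun_bnorm_ge1 _ _ _ yB).
  + exact: energy_test_fun_le_bnorm.
  + exact: energy_test_fun_le_bnorm.
  + exact: free_test_funs.
- by move=> t1 t2 _; apply: sigma_bound_nonincr; rewrite ler1n.
Qed.
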